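(* Let $p>q\geq 1$ be coprime integers, $X$ a smooth closed oriented $4$-manifold homotopy equivalent to $\mathbb{CP}^2$ containing a smoothly embedded copy of $B_{p,q}$, $V$ the closure of $X\setminus B_{p,q}$, and $\widehat X=R_{p,q}\cup V$, $n$, $a_1,\dots,a_n$, $v_1,\dots,v_n$ as in the context. Suppose $n\geq2$. Let $v_{n+1}\in H_2(\widehat X;\mathbb{Z})$ and $c,a_{n+1}\in\mathbb{Z}$ be such that $\{v_1,\dots,v_{n+1}\}$ is a basis of $H_2(\widehat X;\mathbb{Z})$ with Gram matrix having entries $v_i\cdot v_i=-a_i$ ($1\le i\le n+1$), $v_i\cdot v_{i+1}=1$ ($1\le i\le n-1$), $v_n\cdot v_{n+1}=c$, all other off-diagonal entries $0$, with $c^2\equiv pq-1\pmod{p^2}$ and $v_{n+1}\cdot g=1$, where $g$ is the image in $H_2(\widehat X;\mathbb{Z})$ of a generator of $H_2(V;\mathbb{Z})$. Write $g=\sum_{i=1}^{n+1}b_iv_i$. Define integers $d_1,\dots,d_n$ by $d_1=1$, $d_2=a_1d_1$, $d_s=a_{s-1}d_{s-1}-d_{s-2}$ for $s=3,\dots,n$. Then $b_i=c\,d_i$ for $i=1,\dots,n$, $\pm b_{n+1}=a_nd_n-d_{n-1}=p^2$, and $d_n=p^2-pq-1$.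
   Context: For coprime integers $p>q\geq1$, $B_{p,q}$ denotes the Stein rational homology $4$-ball arising as the rational homology ball smoothing of the cyclic quotient singularity of type $\frac{1}{p^2}(pq-1,1)$, and $R_{p,q}$ its minimal resolution, with $\partial R_{p,q}=\partial B_{p,q}$. As a smooth manifold $R_{p,q}$ is the linear plumbing of disk bundles over $2$-spheres with Euler numbers $-a_1,\dots,-a_n$, where $a_i\geq2$ and $\frac{p^2}{pq-1}=a_1-\cfrac{1}{a_2-\cfrac{1}{\cdots-\cfrac{1}{a_n}}}$, $n=b_2(R_{p,q})$; $v_i=[S_i]$ are the classes of the complex-oriented core spheres (vertex basis). $\widehat X:=R_{p,q}\cup V$ is obtained by gluing $\partial R_{p,q}$ to $\partial V$ by an orientation-reversing diffeomorphism; $H_2(\widehat X;\mathbb{Z})$ is free of rank $n+1$, and classes of $R_{p,q}$ and $V$ are viewed in it via inclusion. *)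

From mathcomp Require Import all_boot all_order all_algebra.
Set Implicit Arguments. Unset Strict Implicit. Unset Printing Implicit Defensive.
Import Order.TTheory GRing.Theory Num.Theory.
Local Open Scope ring_scope.

Fixpoint hjcf (l : seq int) : rat :=
  match l with
  | [::] => 0
  | [:: x] => x%:~R
  | x :: s => x%:~R - (hjcf s)^-1
  end.

(* The integers d_s (1-based): d_0 = 0, d_1 = 1, d_{s+2} = a_{s+1} d_{s+1} - d_s.
   dpair a s = (d_s, d_{s+1}). *)
Fixpoint dpair (a : nat -> int) (s : nat) : int * int :=
  match s with
  | 0 => (0, 1)
  | s'.+1 => let: (x, y) := dpair a s' in (y, a s * y - x)
  end.
Definition dseq (a : nat -> int) (s : nat) : int := (dpair a s).1.

(* Gram matrix of the basis v_1, ..., v_{n+1} (matrix index i : 'I_(n+1)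
   corresponds to v_{i+1}):  v_i.v_i = -a_i (1 <= i <= n+1),
   v_i.v_{i+1} = 1 (1 <= i <= n-1), v_n.v_{n+1} = c, all others 0. *)
Definition gram (n : nat) (a : nat -> int) (c : int) : 'M[int]_(n.+1) :=
  \matrix_(i, j)
    let i' := (i : nat).+1 in let j' := (j : nat).+1 in
    if i' == j' then - a i'
    else if ((i'.+1 == j') || (j'.+1 == i')) && (i' <= n)%N && (j' <= n)%N then 1
    else if ((i' == n) && (j' == n.+1)) || ((i' == n.+1) && (j' == n)) then c
    else 0.

From mathcomp Require Import all_boot all_order all_algebra.
From mathcomp Require Import zify ring.
Import Order.TTheory GRing.Theory Num.Theory.
Local Open Scope ring_scope.

(* Let d_s be the continuants of [a_1, ..., a_n] and d'_s those of
   [a_2, ..., a_n], so that [a_1, ..., a_n] = d_{n+1}/d'_n.  The equations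
   g.v_s = 0 for s < n are the recurrence defining d_s, hence b_s = b_1 d_s
   for s <= n.  The Casoratian d_s d'_s - d_{s+1} d'_{s-1} is 1, so
   d_{n+1}/d'_n = p^2/(pq-1) is an equality of reduced fractions: d_{n+1} = p^2,
   and d_n is the inverse of pq-1 modulo p^2 lying in [0, p^2), i.e. p^2-pq-1.
   Then g.v_n = 0 and g.v_{n+1} = 1 give c b_{n+1} = b_1 p^2 with b_{n+1}
   coprime to b_1, so p^2 = m b_{n+1} and c = m b_1; m divides p^2 and
   c^2 - (pq-1), hence pq-1, which forces m = 1.  Finally b_{n+1} = g.g > 0. *)

Section Recurrence.
Variables (R : comPzRingType) (a f g : nat -> R).

Lemma recurrence_unique N :
  (forall s, (s < N)%N -> f s.+2 = a s.+1 * f s.+1 - f s) ->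
  (forall s, (s < N)%N -> g s.+2 = a s.+1 * g s.+1 - g s) ->
  f 0%N = g 0%N -> f 1%N = g 1%N -> forall s, (s <= N.+1)%N -> f s = g s.
Proof.
move=> fS gS f0 f1; suff fg s : (s <= N)%N -> f s = g s /\ f s.+1 = g s.+1.
  by case=> [|s] le_sN; [rewrite f0 | case: (fg s le_sN)].
elim: s => [//|s IH] lt_sN; have [e0 e1] := IH (ltnW lt_sN).
by rewrite fS // gS // e0 e1.
Qed.

Lemma recurrence_casoratian :
  (forall s, f s.+2 = a s.+1 * f s.+1 - f s) ->
  (forall s, g s.+2 = a s.+1 * g s.+1 - g s) ->
  forall s, f s * g s.+1 - f s.+1 * g s = f 0%N * g 1%N - f 1%N * g 0%N.
Proof. by move=> fS gS; elim=> [//|s <-]; rewrite fS gS; ring. Qed.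

End Recurrence.

Lemma dpairE (a : nat -> int) s : dpair a s = (dseq a s, dseq a s.+1).
Proof. by elim: s => [//|s IH]; rewrite /dseq /= IH; case: (dpair a s.+1). Qed.

Lemma dseqSS (a : nat -> int) s : dseq a s.+2 = a s.+1 * dseq a s.+1 - dseq a s.
Proof. by rewrite {1}/dseq /= dpairE. Qed.

Section Continuants.
Variable a : nat -> int.

Lemma dseqS n : (0 < n)%N -> dseq a n.+1 = a n * dseq a n - dseq a n.-1.
Proof. by move=> n_gt0; rewrite -(prednK n_gt0) dseqSS. Qed.

(* [dseq] appends a_{s+1} at the end, whereas [hjcf] peels off a_1 first. *)
Lemma dseqSSl s :
  dseq a s.+2 = a 1%N * dseq (a \o succn) s.+1 - dseq (a \o succn \o succn) s.
Proof.
apply: (@recurrence_unique _ (a \o succn \o succn) (fun t => dseq a t.+2)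
  (fun t => a 1%N * dseq (a \o succn) t.+1 - dseq (a \o succn \o succn) t) s) => //.
- by move=> t _; rewrite dseqSS.
- by move=> t _ /=; rewrite !dseqSS /=; ring.
- by rewrite /dseq /=; ring.
Qed.

Lemma dseq_casoratian s :
  dseq a s.+1 * dseq (a \o succn) s.+1 - dseq a s.+2 * dseq (a \o succn) s = 1.
Proof.
rewrite (@recurrence_casoratian _ (a \o succn) (fun t => dseq a t.+1)) => //.
- by rewrite /dseq /=; ring.
- by move=> t; rewrite dseqSS.
- by move=> t; rewrite dseqSS.
Qed.

End Continuants.

Lemma dseq_increasing {a : nat -> int} {n : nat} k :
  (forall i, (1 <= i <= n)%N -> 2 <= a i) -> (k <= n)%N ->
  0 <= dseq a k < dseq a k.+1.
Proof.
move=> a_ge2; elim: k => [//|k IH] lt_kn; have /andP[d_ge0 d_lt] := IH (ltnW lt_kn).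
by have := a_ge2 k.+1 lt_kn; rewrite dseqSS; nia.
Qed.

Lemma hjcf_cons x s : s != [::] -> hjcf (x :: s) = x%:~R - (hjcf s)^-1.
Proof. by case: s. Qed.

Lemma hjcf_dseq (a : nat -> int) k : (0 < k)%N ->
  (forall i, (1 <= i <= k)%N -> 2 <= a i) ->
  hjcf [seq a i | i <- iota 1 k] = (dseq a k.+1)%:~R / (dseq (a \o succn) k)%:~R.
Proof.
elim: k a => [//|[|k] IH] a _ a_ge2; first by rewrite /dseq /= mulr1 subr0 divr1.
have a'_ge2 i : (1 <= i <= k.+1)%N -> 2 <= (a \o succn) i by move=> ?; apply: a_ge2; lia.
have -> : [seq a i | i <- iota 1 k.+2] = a 1%N :: [seq (a \o succn) i | i <- iota 1 k.+1].
  have iotaS m n : iota m.+1 n = map succn (iota m n) by rewrite -add1n iotaDl.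
  by rewrite (map_comp a succn) -iotaS.
rewrite hjcf_cons // IH // invf_div (dseqSSl a k.+1) intrB intrM.
have /andP[d'_ge0 d'_lt] := dseq_increasing k.+1 a'_ge2 (leqnn _).
have d'_neq0 : (dseq (a \o succn) k.+2)%:~R != 0 :> rat by rewrite intr_eq0; lia.
by field.
Qed.

Lemma reduced_fraction_unique (x y u v : int) : 0 < y -> 0 < v ->
  coprimez x y -> coprimez u v -> x%:~R / y%:~R = u%:~R / v%:~R :> rat ->
  x = u /\ y = v.
Proof.
move=> y_gt0 v_gt0 cxy cuv e; split.
- by have := congr1 numq e; rewrite !coprimeq_num // !gtr0_sg // !mul1r.
- by have := congr1 denq e; rewrite !coprimeq_den // !gt_eqF // !gtr0_norm.
Qed.

Lemma dseq_of_hjcf {a : nat -> int} {n : nat} {P Q : int} : (0 < n)%N ->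
  (forall i, (1 <= i <= n)%N -> 2 <= a i) -> 0 < Q -> coprimez P Q ->
  hjcf [seq a i | i <- iota 1 n] = P%:~R / Q%:~R ->
  dseq a n.+1 = P /\ dseq (a \o succn) n = Q.
Proof.
case: n => [//|m] _ a_ge2 Q_gt0 cPQ; rewrite hjcf_dseq //.
have a'_ge2 i : (1 <= i <= m)%N -> 2 <= (a \o succn) i by move=> ?; apply: a_ge2; lia.
have /andP[d'_ge0 d'_lt] := dseq_increasing m a'_ge2 (leqnn _).
apply: reduced_fraction_unique => //; first lia.
apply/coprimezP; exists (- dseq (a \o succn) m, dseq a m.+1) => /=.
by rewrite -(dseq_casoratian a m); ring.
Qed.

Lemma coprimez_sqr_mulB1 (p q : int) : coprimez (p ^+ 2) (p * q - 1).
Proof.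
by apply/coprimezP; exists (- (p * q - q ^+ 2 - 1), p ^+ 2 - p * q - 1) => /=; ring.
Qed.

Lemma lens_coprime (p q : nat) : coprimez (p ^ 2)%N%:Z ((p * q)%N%:Z - 1).
Proof. by rewrite -mulnn !PoszM -expr2 coprimez_sqr_mulB1. Qed.

Lemma eqz_mod_small (P x y : int) : 0 <= x < P -> 0 <= y < P ->
  (x == y %[mod P])%Z -> x = y.
Proof. by move=> x_small y_small /eqP; rewrite !modz_small. Qed.

Lemma dseq_of_hjcf_lens {p q n : nat} {a : nat -> int} :
  (1 <= q)%N -> (q < p)%N -> (0 < n)%N -> (forall i, (1 <= i <= n)%N -> 2 <= a i) ->
  hjcf [seq a i | i <- iota 1 n] = ((p ^ 2)%N%:R / ((p * q)%N%:R - 1)) ->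
  dseq a n.+1 = (p ^ 2)%N%:Z /\ dseq a n = (p ^ 2)%N%:Z - (p * q)%N%:Z - 1.
Proof.
move=> q_ge1 lt_qp n_gt0 a_ge2 a_hjcf.
set P := (p ^ 2)%N%:Z; set Q := (p * q)%N%:Z - 1.
have PE : P = p%:Z ^+ 2 by rewrite /P expr2 -PoszM mulnn.
have QE : Q = p%:Z * q%:Z - 1 by rewrite /Q PoszM.
have Q_gt0 : 0 < Q by rewrite QE; nia.
have cPQ : coprimez P Q := lens_coprime p q.
have a_hjcfPQ : hjcf [seq a i | i <- iota 1 n] = P%:~R / Q%:~R by rewrite a_hjcf intrB.
have [dP dQ] := dseq_of_hjcf n_gt0 a_ge2 Q_gt0 cPQ a_hjcfPQ.
split=> //; case: n {a_hjcf a_hjcfPQ} n_gt0 a_ge2 dP dQ => [//|m] _ a_ge2 dP dQ.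
have /andP[d_ge0 d_lt] := dseq_increasing m.+1 a_ge2 (leqnn _).
apply: (@eqz_mod_small P); [lia | rewrite PE QE in Q_gt0 *; nia |].
have d_inv : dseq a m.+1 * Q = 1 + P * dseq (a \o succn) m.
  by rewrite -(dseq_casoratian a m) dP dQ; ring.
rewrite eqz_mod_dvd -(Gauss_dvdzl _ cPQ); apply/dvdzP.
exists (dseq (a \o succn) m - (p%:Z * q%:Z - q%:Z ^+ 2 - 1)).
by rewrite mulrBl d_inv PE QE PoszM; ring.
Qed.

(* [gram_offdiag n c k] is v_{k+1}.v_{k+2}. *)
Definition gram_offdiag (n : nat) (c : int) (k : nat) : int :=
  if (k.+1 < n)%N then 1 else if k.+1 == n then c else 0.

Lemma gram_offdiag_inner {n c} k : (k.+1 < n)%N -> gram_offdiag n c k = 1.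
Proof. by rewrite /gram_offdiag => ->. Qed.

Lemma gram_offdiag_last {n c} : (0 < n)%N -> gram_offdiag n c n.-1 = c.
Proof. by move=> n_gt0; rewrite /gram_offdiag prednK // ltnn eqxx. Qed.

Lemma gram_offdiag_out {n c} k : (n <= k)%N -> gram_offdiag n c k = 0.
Proof. by move=> le_nk; rewrite /gram_offdiag ltnNge ltnW // gtn_eqF. Qed.

Lemma gramE n a c (i j : 'I_n.+1) : gram n a c i j =
  - a j.+1 *+ (i == j :> nat) + gram_offdiag n c j *+ (i == j.+1 :> nat)
  + gram_offdiag n c i *+ (i.+1 == j :> nat).
Proof.
rewrite mxE /gram_offdiag !mulrb; case: i j => [i lt_in] [j lt_jn] /=.
by repeat (case: eqP => ? /= || case: leqP => ? /=);
  rewrite ?addr0 ?add0r //; (congruence || lia).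
Qed.

Lemma row_mulmx_gram n a c (f : nat -> int) (j : 'I_n.+1) : f 0%N = 0 ->
  (\row_(i < n.+1) f i.+1 *m gram n a c) 0 j =
  f j * gram_offdiag n c j.-1 - a j.+1 * f j.+1 + f j.+2 * gram_offdiag n c j.
Proof.
move=> f0; rewrite mxE.
under eq_bigr => i _ do rewrite mxE gramE !mulrDr !mulrnAr !mulrb.
rewrite !big_split -!big_mkcond /= (big_ord1_eq _ (fun i => f i.+1 * _))
  (big_ord1_eq _ (fun i => f i.+1 * _)).
case: j => j /= lt_jn; rewrite lt_jn.
have -> : (if (j.+1 < n.+1)%N then f j.+2 * gram_offdiag n c j else 0)
          = f j.+2 * gram_offdiag n c j.
  by case: ltnP => // le_nj; rewrite gram_offdiag_out ?mulr0.
case: j lt_jn => [|k] lt_kn.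
  by rewrite big_pred0 // f0 mul0r; ring.
under eq_bigl do rewrite eqSS.
by rewrite (big_ord1_eq _ (fun i => f i.+1 * gram_offdiag n c i)) ltnW //; ring.
Qed.

(* The paper's 1-based coefficients: [rowcoef b s] is b_s, padded with b_0 = 0. *)
Definition rowcoef {n} (b : 'rV[int]_n.+1) (s : nat) : int :=
  if s is k.+1 then b 0 (inord k) else 0.

Lemma row_rowcoef {n} (b : 'rV[int]_n.+1) : \row_(i < n.+1) rowcoef b i.+1 = b.
Proof. by apply/rowP => i; rewrite mxE /= inord_val. Qed.

Lemma rowcoef_last {n} (b : 'rV[int]_n.+1) : rowcoef b n.+1 = b 0 ord_max.
Proof. by congr (b 0 _); apply/val_inj; rewrite /= inordK. Qed.

Section GramDual.
Context {n : nat} {a : nat -> int} {c : int} {b : 'rV[int]_n.+1}.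
Hypotheses (n_ge2 : (2 <= n)%N) (b_dual : b *m gram n a c = delta_mx 0 ord_max).

Lemma gram_dual_eq j : (j <= n)%N ->
  rowcoef b j * gram_offdiag n c j.-1 - a j.+1 * rowcoef b j.+1
  + rowcoef b j.+2 * gram_offdiag n c j = (j == n)%:R.
Proof.
move=> le_jn; move/rowP/(_ (inord j)): b_dual.
rewrite -{1}(row_rowcoef b) row_mulmx_gram // inordK // => ->.
by rewrite mxE -[inord j == _](inj_eq val_inj) /= inordK.
Qed.

Lemma rowcoef_dseq s : (s <= n)%N -> rowcoef b s = rowcoef b 1 * dseq a s.
Proof.
move=> le_sn.
apply: (@recurrence_unique _ a (rowcoef b) (fun t => rowcoef b 1 * dseq a t) n.-1);
  rewrite ?mulr0 ?mulr1 //; last lia.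
- move=> t lt_tn; have := gram_dual_eq t (leq_trans (ltnW lt_tn) (leq_pred n)).
  by rewrite (gram_offdiag_inner t) ?(gram_offdiag_inner t.-1) ?ltn_eqF; lia.
- by move=> t _; rewrite dseqSS; ring.
Qed.

Lemma gram_dual_penultimate : c * rowcoef b n.+1 = rowcoef b 1 * dseq a n.+1.
Proof.
have n_gt0 : (0 < n)%N by lia.
have lt_n2n : (n.-2.+1 < n)%N by lia.
have := gram_dual_eq n.-1 (leq_pred n).
rewrite (gram_offdiag_inner n.-2) // gram_offdiag_last // ltn_eqF ?prednK //.
by rewrite (rowcoef_dseq n.-1) ?leq_pred // (rowcoef_dseq n) // dseqS //; lia.
Qed.

Lemma gram_dual_last : rowcoef b 1 * dseq a n * c - a n.+1 * rowcoef b n.+1 = 1.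
Proof.
have n_gt0 : (0 < n)%N by lia.
have := gram_dual_eq n (leqnn n).
by rewrite gram_offdiag_last // gram_offdiag_out // eqxx (rowcoef_dseq n) //; lia.
Qed.

End GramDual.

Lemma cross_mul_sqr_mod_eq {P Q B x c : int} : 0 < P -> 0 < B ->
  coprimez P Q -> coprimez B x -> c * B = x * P -> (P %| c ^+ 2 - Q)%Z ->
  B = P /\ x = c.
Proof.
move=> P_gt0 B_gt0 cPQ cBx cB_xP P_dvd.
have /dvdzP[m P_mB] : (B %| P)%Z by rewrite -(Gauss_dvdzr _ cBx) -cB_xP dvdz_mull.
have c_xm : c = x * m by apply: (mulIf (lt0r_neq0 B_gt0)); rewrite cB_xP P_mB mulrA.
have m_dvdP : (m %| P)%Z by rewrite P_mB dvdz_mulr.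
have m_dvdQ : (m %| Q)%Z.
  have -> : Q = c * c - (c ^+ 2 - Q) by ring.
  by rewrite rpredB ?(dvdz_trans m_dvdP P_dvd) // c_xm dvdz_mull // dvdz_mull.
have : (m %| gcdz P Q)%Z by rewrite dvdz_gcd m_dvdP.
rewrite (eqP cPQ) dvdz1 => /eqP m_unit.
have m1 : m = 1 by nia.
by rewrite P_mB c_xm m1 mul1r mulr1.
Qed.

Theorem lemma3p2 (p q n : nat) (a : nat -> int) (c : int) (b : 'rV[int]_(n.+1)) :
  (1 <= q)%N -> (q < p)%N -> coprime p q ->
  (* a_1..a_n: the Hirzebruch-Jung expansion of p^2/(pq-1) *)
  (forall i, (1 <= i <= n)%N -> 2 <= a i) ->
  hjcf [seq a i | i <- iota 1 n] = ((p ^ 2)%N%:R / ((p * q)%N%:R - 1)) ->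
  (2 <= n)%N ->
  (c ^+ 2 == (p * q)%N%:Z - 1 %[mod (p ^ 2)%N%:Z])%Z ->
  (* H_2(X^) unimodular (closed oriented 4-manifold) *)
  (\det (gram n a c) = 1 \/ \det (gram n a c) = -1) ->
  (* g = sum b_i v_i : g.v_i = 0 (1 <= i <= n), g.v_{n+1} = 1 *)
  b *m gram n a c = delta_mx 0 ord_max ->
  (* g.g > 0 (g lies in V inside X, whose form is positive definite) *)
  0 < (b *m gram n a c *m b^T) 0 0 ->
  (forall i : 'I_(n.+1), (i < n)%N -> b 0 i = c * dseq a i.+1) /\
  (b 0 ord_max = (p ^ 2)%N%:Z \/ - b 0 ord_max = (p ^ 2)%N%:Z) /\
  a n * dseq a n - dseq a n.-1 = (p ^ 2)%N%:Z /\
  dseq a n = (p ^ 2)%N%:Z - (p * q)%N%:Z - 1.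
Proof.
move=> q_ge1 lt_qp _ a_ge2 a_hjcf n_ge2 c2_mod _ b_dual g_pos.
have n_gt0 : (0 < n)%N by lia.
have [dP dN] := dseq_of_hjcf_lens q_ge1 lt_qp n_gt0 a_ge2 a_hjcf.
have B_gt0 : 0 < rowcoef b n.+1 by move: g_pos; rewrite b_dual -rowE !mxE rowcoef_last.
have cB_xP : c * rowcoef b n.+1 = rowcoef b 1 * (p ^ 2)%N.
  by rewrite -dP (gram_dual_penultimate n_ge2 b_dual).
have cBx : coprimez (rowcoef b n.+1) (rowcoef b 1).
  apply/coprimezP; exists (- a n.+1, dseq a n * c) => /=.
  by rewrite -(gram_dual_last n_ge2 b_dual); ring.
have P_gt0 : 0 < (p ^ 2)%N%:Z by rewrite ltz_nat expn_gt0; lia.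
have P_dvd : ((p ^ 2)%N%:Z %| c ^+ 2 - ((p * q)%N%:Z - 1))%Z by rewrite -eqz_mod_dvd.
have [BP xc] := cross_mul_sqr_mod_eq P_gt0 B_gt0 (lens_coprime p q) cBx cB_xP P_dvd.
split; [|split; [|split]] => //.
- by move=> i lt_in; rewrite -xc -(rowcoef_dseq n_ge2 b_dual) //= inord_val.
- by left; rewrite -rowcoef_last BP.
- by rewrite -dseqS.
Qed.
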